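(* Let $\mathcal{H}$ be the Hilbert space described in the context and $p\in[1,\infty)$. Let $\mu$ be a Borel probability measure on $\mathcal{H}$ such that for some $s>2p$, $$\widetilde{M}_s(\mu):=\int \Big(\sum_{j=1}^{\infty}\frac{1}{\lambda_j^2}\langle x, \psi_j\rangle^2_{L^2} \Big)^{\frac{s}{2}}\,\mu(dx) <\infty,$$ and assume there are constants $\gamma,c,C>0$ with $\lambda_j\le C\exp(-cj^\gamma)$ for all $j\ge1$. Then $$\int_{\mathcal{H}} \|\mathrm{Proj}^d (x)-x\|^q_{\mathcal{H}}\,\mu(dx) \leq C \exp\left(-c qd^\gamma\right)$$ for all $d\geq 1$ and all $q\in [p,s]$, where the constant $c$ depends only on $\widetilde{M}_s(\mu)$ and the constant $C$ depends only on $q$ and $\widetilde{M}_s(\mu)$.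
   Context: Let $(\Omega,m)$ be a measure space, $(\psi_j)_{j\ge1}$ an orthonormal basis of $L^2(\Omega,m)$ with inner product $\langle\cdot,\cdot\rangle_{L^2}$, and $(\lambda_j)_{j\ge1}$ a non-increasing sequence of positive numbers converging to $0$. Let $\mathcal{H}=\{f\in L^2(\Omega,m):\sum_j\langle f,\psi_j\rangle_{L^2}^2/\lambda_j<\infty\}$ with inner product $\langle f,g\rangle_{\mathcal{H}}=\sum_j\lambda_j^{-1}\langle f,\psi_j\rangle_{L^2}\langle g,\psi_j\rangle_{L^2}$ and norm $\|\cdot\|_{\mathcal{H}}$. $\mathrm{Proj}^d$ is the orthogonal projection onto $\mathrm{span}\{\sqrt{\lambda_j}\psi_j:j=1,\dots,d\}$. *)

From HB Require Import structures.
From mathcomp Require Import all_boot all_order all_algebra.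
From mathcomp Require Import all_classical all_reals all_analysis.
Set Implicit Arguments. Unset Strict Implicit. Unset Printing Implicit Defensive.
Import Order.TTheory GRing.Theory Num.Theory.
Import numFieldNormedType.Exports.
Local Open Scope classical_set_scope.
Local Open Scope ring_scope.

Section HilbertSetting.
Context {d : measure_display} {Omega : measurableType d} {R : realType}.
Variables (m : {measure set Omega -> \bar R}) (psi : nat -> Omega -> R)
  (lam : nat -> R).

Definition inL2 (f : Omega -> R) : Prop :=
  measurable_fun setT f /\ (\int[m]_w (((f w) ^+ 2)%:E) < +oo)%E.

Definition L2ip (f g : Omega -> R) : R := Rintegral m setT (fun w => f w * g w).

Definition Hnorm2 (f : Omega -> R) : \bar R :=
  (\sum_(0 <= j <oo) (((L2ip f (psi j)) ^+ 2 / lam j)%:E))%E.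

Definition Hnorm (f : Omega -> R) : \bar R := (Hnorm2 f `^ (2^-1))%E.

Definition inH (f : Omega -> R) : Prop := inL2 f /\ (Hnorm2 f < +oo)%E.

Definition Hip (f g : Omega -> R) : R :=
  limn (fun n => \sum_(0 <= j < n) ((lam j)^-1 * L2ip f (psi j) * L2ip g (psi j))).

(* the H-orthonormal family sqrt(lambda_j) psi_j *)
Definition Hbasis (j : nat) : Omega -> R := fun w => Num.sqrt (lam j) * psi j w.

(* Proj^d : orthogonal projection (in H) onto span{sqrt(lambda_j) psi_j : j < d}
   (0-indexed: paper's indices 1..d are j = 0..d-1) *)
Definition Proj (n : nat) (f : Omega -> R) : Omega -> R :=
  fun w => \sum_(j < n) Hip f (Hbasis j) * Hbasis j w.

Definition L2_orthonormal_basis : Prop :=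
  (forall j, inL2 (psi j)) /\
  (forall i j, L2ip (psi i) (psi j) = (i == j)%:R) /\
  (forall f, inL2 f ->
     (fun n => \int[m]_w (((f w - \sum_(j < n) L2ip f (psi j) * psi j w) ^+ 2)%R)%:E)%E
       @ \oo --> 0%E).

Lemma inH0 : inH (fun _ => 0).
Proof.
have ip0 : forall g, L2ip (fun _ => 0) g = 0.
  move=> g; rewrite /L2ip /Rintegral; under eq_fun do rewrite mul0r.
  by rewrite integral0.
split; first split.
- exact: measurable_cst.
- under eq_integral do rewrite expr0n /=.
  by rewrite integral0.
- rewrite /Hnorm2.
  rewrite eseries0 //= => i _ _.
  by rewrite ip0 expr0n /= mul0r.
Qed.

Definition Hsub := {f : Omega -> R | inH f}.
HB.instance Definition _ := gen_eqMixin Hsub.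
HB.instance Definition _ := gen_choiceMixin Hsub.
HB.instance Definition _ := isPointed.Build Hsub (exist _ (fun _ => 0) inH0).

Definition Hopen (U : set Hsub) : Prop :=
  forall f, U f -> exists2 r : R, 0 < r &
    forall g : Hsub, (Hnorm (fun w => (sval g w - sval f w)%R) < r%:E)%E -> U g.

Definition Hborel := g_sigma_algebraType Hopen.

Definition Mtilde_integrand (s : R) (x : Hsub) : \bar R :=
  ((\sum_(0 <= j <oo) (((L2ip (sval x) (psi j)) ^+ 2 / (lam j) ^+ 2)%:E)) `^ (s / 2))%E.

End HilbertSetting.
Arguments Mtilde_integrand {d Omega R} m psi lam s x.

(* Expanding in the basis, [Proj^n x - x] has coordinates [<x, psi_j>] for
   [j >= n] only, so [||Proj^n x - x||_H^2 = sum_(j >= n) <x, psi_j>^2 / lam_j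
   <= lam_n * sum_j <x, psi_j>^2 / lam_j^2].  Raising to the power [q/2 <= s/2]
   and using [t^(q/2) <= 1 + t^(s/2)] bounds the integrand by
   [lam_n^(q/2) (1 + Mtilde integrand)], whose integral is at most
   [lam_n^(q/2) (1 + M)]; the decay of [lam_n] then gives the exponential rate. *)

From HB Require Import structures.
From mathcomp Require Import all_boot all_order all_algebra.
From mathcomp Require Import all_classical all_reals all_analysis.
From mathcomp Require Import ring lra measurable_realfun.
Set Implicit Arguments. Unset Strict Implicit. Unset Printing Implicit Defensive.
Import Order.TTheory GRing.Theory Num.Theory.
Import numFieldNormedType.Exports.
Local Open Scope classical_set_scope.
Local Open Scope ring_scope.

Section Rintegral_sum.
Context {d : measure_display} {T : measurableType d} {R : realType}.
Variables (mu : {measure set T -> \bar R}) (D : set T) (mD : measurable D).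
Variables (I : Type) (f : I -> T -> R).
Hypothesis intf : forall i, mu.-integrable D (EFin \o f i).

Lemma integrable_Rsum (s : seq I) (P : pred I) :
  mu.-integrable D (EFin \o (fun x => \sum_(i <- s | P i) f i x)).
Proof.
apply: (eq_integrable mD (fun x => \sum_(i <- s | P i) (f i x)%:E)).
  by move=> x _; rewrite /= sumEFin.
by apply: integrable_sum => // i _; exact: intf.
Qed.

Lemma Rintegral_sum (s : seq I) (P : pred I) :
  \int[mu]_(x in D) (\sum_(i <- s | P i) f i x) =
  \sum_(i <- s | P i) \int[mu]_(x in D) f i x.
Proof.
rewrite /Rintegral; under eq_integral do rewrite -sumEFin.
rewrite integral_sum//.
under eq_bigr => i _ do rewrite -(fineK (integrable_fin_num mD (intf i))).
by rewrite sumEFin.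
Qed.

End Rintegral_sum.

Section L2_inner_product.
Context {d : measure_display} {T : measurableType d} {R : realType}.
Variable m : {measure set T -> \bar R}.

Lemma inL2_sqr_integrable f : inL2 m f -> m.-integrable setT (EFin \o (fun w => f w ^+ 2)).
Proof.
move=> [mf fi]; apply/integrableP; split.
  by apply/measurable_EFinP; apply: measurable_funX.
by under eq_integral => x _ do rewrite /= ger0_norm ?sqr_ge0//.
Qed.

Lemma inL2_mul_integrable f g : inL2 m f -> inL2 m g ->
  m.-integrable setT (EFin \o (fun w => f w * g w)).
Proof.
move=> hf hg.
have := integrableD measurableT (inL2_sqr_integrable hf) (inL2_sqr_integrable hg).
apply: le_integrable => //.
  by apply/measurable_EFinP; apply: measurable_funM; [case: hf|case: hg].
move=> x _ /=; rewrite !lee_fin [X in _ <= X]ger0_norm ?addr_ge0 ?sqr_ge0// normrM.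
have fx := normr_ge0 (f x); have gx := normr_ge0 (g x).
rewrite -(real_normK (num_real (f x))) -(real_normK (num_real (g x))); nra.
Qed.

Lemma L2ipBl f g h : m.-integrable setT (EFin \o (fun w => f w * h w)) ->
  m.-integrable setT (EFin \o (fun w => g w * h w)) ->
  L2ip m (fun w => f w - g w) h = L2ip m f h - L2ip m g h.
Proof.
move=> fh gh; rewrite /L2ip -RintegralB//.
by apply: eq_Rintegral => w _; rewrite mulrBl.
Qed.

Variables (I : Type) (g : I -> T -> R) (h : T -> R).
Hypothesis gh_int : forall i, m.-integrable setT (EFin \o (fun w => g i w * h w)).

Lemma integrable_suml_mul (s : seq I) (P : pred I) (a : I -> R) :
  m.-integrable setT (EFin \o (fun w => (\sum_(i <- s | P i) a i * g i w) * h w)).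
Proof.
apply: (eq_integrable _ (EFin \o fun w => \sum_(i <- s | P i) a i * (g i w * h w))) => //.
  by move=> w _; rewrite /= mulr_suml; under eq_bigr do rewrite mulrA.
apply: integrable_Rsum => // i.
exact: (integrableZl measurableT (a i) (gh_int i)).
Qed.

Lemma L2ip_suml (s : seq I) (P : pred I) (a : I -> R) :
  L2ip m (fun w => \sum_(i <- s | P i) a i * g i w) h
  = \sum_(i <- s | P i) a i * L2ip m (g i) h.
Proof.
rewrite /L2ip.
under eq_Rintegral do rewrite mulr_suml; under eq_Rintegral do under eq_bigr do rewrite -mulrA.
rewrite Rintegral_sum//; last by move=> i; exact: (integrableZl measurableT (a i) (gh_int i)).
by apply: eq_bigr => i _; rewrite RintegralZl.
Qed.

End L2_inner_product.

Lemma sum_ord_mul_delta {R : ringType} n i (a : nat -> R) :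
  \sum_(j < n) a j * ((j : nat) == i)%:R = if (i < n)%N then a i else 0.
Proof.
rewrite -(@big_ord1_eq R 0 +%R a i n) [RHS]big_mkcond; apply: eq_bigr => j _.
by case: eqP => _; rewrite ?mulr1 ?mulr0.
Qed.

Section power_bounds.
Context {R : realType}.

Lemma poweR_le1D (x : \bar R) (r t : R) : (0 <= x)%E -> 0 < r -> r <= t ->
  (x `^ r <= 1 + x `^ t)%E.
Proof.
move=> x0 r0 rt; have t0 := lt_le_trans r0 rt.
case: x x0 => [x||//]; last by rewrite !poweRyr ?gt_eqF// leey.
rewrite lee_fin => x0; rewrite !poweR_EFin -EFinD lee_fin.
have [x1|x1] := lerP x 1.
  apply: le_trans (_ : 1 <= _); last by rewrite lerDl powR_ge0.
  by have := ge0_ler_powR (ltW r0); move/(_ x 1); rewrite powR1 !nnegrE; apply.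
apply: le_trans (_ : x `^ t <= _); last by rewrite lerDr.
by apply: ler_powR => //; exact: ltW.
Qed.

Lemma poweR_le_mul1D (x y : \bar R) (a r t : R) :
  (0 <= x)%E -> (0 <= y)%E -> 0 < a -> 0 < r -> r <= t -> (x <= a%:E * y)%E ->
  (x `^ r <= (a `^ r)%:E * (1 + y `^ t))%E.
Proof.
move=> x0 y0 a0 r0 rt xy.
have ay0 : (0 <= a%:E * y)%E by rewrite mule_ge0// lee_fin ltW.
apply: le_trans (gt0_ler_poweR (ltW r0) _ _ xy) _; rewrite ?in_itv/= ?leey ?x0 ?ay0//.
rewrite poweRM ?lee_fin ?(ltW a0)// poweR_EFin lee_pmul ?lee_fin ?powR_ge0 ?poweR_ge0//.
exact: poweR_le1D.
Qed.

End power_bounds.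

Section orthonormal_expansion.
Context {d : measure_display} {T : measurableType d} {R : realType}.
Variables (m : {measure set T -> \bar R}) (psi : nat -> T -> R) (lam : nat -> R).
Hypothesis psi_L2 : forall j, inL2 m (psi j).
Hypothesis psi_orth : forall i j, L2ip m (psi i) (psi j) = (i == j)%:R.
Hypothesis lam_pos : forall j, 0 < lam j.

Lemma L2ip_Hbasis j i : L2ip m (Hbasis psi lam j) (psi i) = Num.sqrt (lam j) * (i == j)%:R.
Proof.
rewrite /L2ip /Hbasis; under eq_Rintegral do rewrite -mulrA.
rewrite RintegralZl ?inL2_mul_integrable//; congr (_ * _).
by rewrite eq_sym; exact: psi_orth.
Qed.

Lemma Hip_Hbasis f j : Hip m psi lam f (Hbasis psi lam j) = L2ip m f (psi j) / Num.sqrt (lam j).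
Proof.
have sqrt_gt0 : 0 < Num.sqrt (lam j) by rewrite sqrtr_gt0.
rewrite /Hip; apply: (lim_near_cst (@Rhausdorff R)); near=> n.
rewrite big_mkord; under eq_bigr do rewrite L2ip_Hbasis mulrA.
rewrite (sum_ord_mul_delta n j (fun i => (lam i)^-1 * L2ip m f (psi i) * _)) ifT.
  by rewrite -{1}(sqr_sqrtr (ltW (lam_pos j))); field; rewrite gt_eqF.
by near: n; exact: nbhs_infty_gt.
Unshelve. all: by end_near.
Qed.

Lemma ProjE n f : Proj m psi lam n f = fun w => \sum_(j < n) L2ip m f (psi j) * psi j w.
Proof.
apply/funext => w; apply: eq_bigr => j _.
by rewrite Hip_Hbasis /Hbasis mulrA divfK// gt_eqF// sqrtr_gt0.
Qed.

Lemma L2ip_Proj_sub n f i : inL2 m f ->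
  L2ip m (fun w => Proj m psi lam n f w - f w) (psi i)
  = if (i < n)%N then 0 else - L2ip m f (psi i).
Proof.
move=> f_L2; have psi_int j := inL2_mul_integrable (psi_L2 j) (psi_L2 i).
rewrite ProjE L2ipBl ?integrable_suml_mul ?inL2_mul_integrable//.
rewrite L2ip_suml//; under eq_bigr do rewrite psi_orth.
by rewrite (sum_ord_mul_delta n i (fun k => L2ip m f (psi k))); case: ifP; rewrite ?subrr ?sub0r.
Qed.

Hypothesis lam_noninc : forall i j : nat, (i <= j)%N -> lam j <= lam i.

Lemma Hnorm2_Proj_sub_le n f : inL2 m f ->
  (Hnorm2 m psi lam (fun w => (Proj m psi lam n f w - f w)%R)
   <= (lam n)%:E * \sum_(0 <= j <oo) ((L2ip m f (psi j) ^+ 2 / lam j ^+ 2)%:E))%E.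
Proof.
move=> f_L2; rewrite /Hnorm2 -nneseriesZl; last first.
  by move=> j _; rewrite lee_fin divr_ge0 ?sqr_ge0.
apply: lee_nneseries => [j _ _|j _].
  by rewrite lee_fin divr_ge0 ?sqr_ge0 // ltW.
rewrite L2ip_Proj_sub // -EFinM lee_fin; case: ltnP => nj.
  by rewrite expr0n /= mul0r mulr_ge0 ?divr_ge0 ?sqr_ge0 // ltW.
have lam_j := lam_pos j.
have -> : (- L2ip m f (psi j)) ^+ 2 / lam j = lam j * (L2ip m f (psi j) ^+ 2 / lam j ^+ 2).
  by rewrite sqrrN; field; rewrite gt_eqF.
by rewrite ler_wpM2r ?divr_ge0 ?sqr_ge0 ?lam_noninc.
Qed.

Lemma Hnorm_Proj_sub_pow_le n (x : Hsub m psi lam) q s : 0 < q -> q <= s ->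
  (Hnorm m psi lam (fun w => (Proj m psi lam n (sval x) w - sval x w)%R) `^ q
   <= (lam n `^ (q / 2))%:E * (1 + Mtilde_integrand m psi lam s x))%E.
Proof.
move=> q0 qs; rewrite /Hnorm -poweRrM mulrC; apply: poweR_le_mul1D.
- by apply: nneseries_ge0 => j _ _; rewrite lee_fin divr_ge0 ?sqr_ge0// ltW.
- by apply: nneseries_ge0 => j _ _; rewrite lee_fin divr_ge0 ?sqr_ge0.
- exact: lam_pos.
- by rewrite divr_gt0.
- by rewrite ler_pM2r.
- exact: Hnorm2_Proj_sub_le (proj1 (svalP x)).
Qed.

End orthonormal_expansion.

(* Neither [x |-> ||Proj^n x - x||_H^q] nor the integrand of [Mtilde] is known to
   be measurable for the Borel sigma-algebra of [H], so integrals are compared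
   through their definition as a supremum over simple functions. *)
Section integral_of_nonmeasurable.
Local Open Scope ereal_scope.
Context {d : measure_display} {T : measurableType d} {R : realType}.
Variable mu : {measure set T -> \bar R}.
Import HBNNSimple.

Lemma ge0_le_integralT_nonmeasurable (F G : T -> \bar R) :
  (forall x, 0 <= F x) -> (forall x, F x <= G x) ->
  \int[mu]_x F x <= \int[mu]_x G x.
Proof.
move=> F0 FG; have G0 x : 0 <= G x := le_trans (F0 x) (FG x).
rewrite (ge0_integralTE _ F0) (ge0_integralTE _ G0).
apply: ereal_sup_le => _ [h hF <-]; exists h => //= x.
exact: le_trans (hF x) (FG x).
Qed.

Lemma ge0_integralT_le_affine (F G : T -> \bar R) (k : R) : (0 < k)%R ->
  (forall x, 0 <= F x) -> (forall x, 0 <= G x) ->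
  (forall x, F x <= k%:E * (1 + G x)) ->
  \int[mu]_x F x <= k%:E * (mu setT + \int[mu]_x G x).
Proof.
move=> k_gt0 F0 G0 FG; rewrite (ge0_integralTE _ F0).
apply: ge_ereal_sup => _ [h hF <-]; rewrite -integralT_nnsfun.
(* a simple [h <= k (1 + G)] splits as [k + k g] with [g] measurable and [g <= G] *)
pose g x := (Num.max (h x - k) 0 / k)%R.
have mg : measurable_fun setT g.
  apply: measurable_funM => //; apply: measurable_maxr => //.
  by apply: measurable_funB => //; exact: measurable_funPT.
have g0 x : (0 <= g x)%R by rewrite divr_ge0 ?le_max ?lexx ?orbT// ltW.
have h_le x : (h x)%:E <= k%:E + k%:E * (g x)%:E.
  by rewrite -EFinM -EFinD lee_fin mulrCA divff ?gt_eqF// mulr1 -lerBlDl le_max lexx.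
have g_le x : (g x)%:E <= G x.
  have := le_trans (hF x) (FG x); rewrite /g.
  case: lerP => [_ _|hk]; first by rewrite mul0r.
  move: (G0 x); case: (G x) => [r _ hr|_ _|//]; last exact: leey.
  by move: hr; rewrite -EFinD -EFinM !lee_fin ler_pdivrMr//; lra.
apply: (@le_trans _ _ (\int[mu]_x (k%:E + k%:E * (g x)%:E))).
  by apply: ge0_le_integralT_nonmeasurable => // x; rewrite lee_fin.
rewrite ge0_integralD//; last 3 first.
- by move=> x _; rewrite lee_fin ltW.
- by move=> x _; rewrite -EFinM lee_fin mulr_ge0// ltW.
- by apply/measurable_EFinP; apply: measurable_funM.
rewrite integral_cst// ge0_integralZl_EFin//; last 3 first.
- by move=> x _; rewrite lee_fin.
- exact/measurable_EFinP.
- exact: ltW.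
rewrite [leRHS]ge0_muleDr ?integral_ge0// leeD2l// lee_pmul2l ?lte_fin//.
exact: ge0_le_integralT_nonmeasurable.
Qed.

End integral_of_nonmeasurable.

Lemma powR_le_expR_decay {R : realType} (l C c y z r : R) :
  0 < C -> 0 <= c -> 0 <= r -> 0 <= l -> y <= z -> l <= C * expR (- c * z) ->
  l `^ r <= C `^ r * expR (- c * r * y).
Proof.
move=> C0 c0 r0 l0 yz lCz.
have Ce0 : 0 <= C * expR (- c * z) by rewrite mulr_ge0 ?expR_ge0// ltW.
apply: le_trans (ge0_ler_powR r0 _ _ lCz) _; rewrite ?nnegrE//.
rewrite powRM ?expR_ge0 ?(ltW C0)// -expRM ler_wpM2l ?powR_ge0// ler_expR.
by rewrite mulrAC ler_wnM2l// mulr_le0_ge0// oppr_le0.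
Qed.

Theorem lemma6p5 (d : measure_display) (Omega : measurableType d) (R : realType)
  (m : {measure set Omega -> \bar R}) (psi : nat -> Omega -> R) (lam : nat -> R)
  (onb : L2_orthonormal_basis m psi)
  (lam_pos : forall j, 0 < lam j)
  (lam_noninc : forall i j : nat, (i <= j)%N -> lam j <= lam i)
  (lam_cvg : lam @ \oo --> 0)
  (p s gam c C : R) (hp : 1 <= p) (hs : 2 * p < s)
  (hgam : 0 < gam) (hc : 0 < c) (hC : 0 < C)
  (decay : forall j : nat, lam j <= C * expR (- c * (j.+1)%:R `^ gam)) :
  forall M : R, exists2 c' : R, 0 < c' &
    forall q : R, p <= q <= s -> exists2 C' : R, 0 < C' &
      forall mu : probability (Hborel m psi lam) R,
        (\int[mu]_x Mtilde_integrand m psi lam s x = M%:E)%E ->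
        forall n : nat, (1 <= n)%N ->
        (\int[mu]_x (Hnorm m psi lam
             (fun w => (Proj m psi lam n (sval x) w - sval x w)%R) `^ q)
           <= (C' * expR (- c' * q * n%:R `^ gam))%:E)%E.
Proof.
case: onb => psi_L2 [psi_orth _] M; exists (c / 2); first by rewrite divr_gt0.
move=> q /andP[pq qs]; have q0 : 0 < q by rewrite (lt_le_trans _ pq)// (lt_le_trans _ hp).
exists (C `^ (q / 2) * (1 + `|M|)); first by rewrite mulr_gt0 ?powR_gt0// ltr_wpDr.
move=> mu hM n _.
have pointwise (x : Hborel m psi lam) :=
  Hnorm_Proj_sub_pow_le psi_L2 psi_orth lam_pos lam_noninc n x q0 qs.
have Mtilde_ge0 (x : Hborel m psi lam) : (0 <= Mtilde_integrand m psi lam s x)%E :=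
  poweR_ge0 _ _.
apply: le_trans (ge0_integralT_le_affine mu (powR_gt0 (q / 2) (lam_pos n))
  (fun x => poweR_ge0 _ _) Mtilde_ge0 pointwise) _.
(* [mu setT] is displayed through the measurable structure of [Hborel], so
   [probability_setT] only applies up to conversion. *)
rewrite [X in (_ * (X + _))%E](_ : _ = 1%E); last exact: (probability_setT mu).
rewrite hM -EFinD -EFinM lee_fin.
have decay_n : lam n `^ (q / 2) <= C `^ (q / 2) * expR (- (c / 2) * q * n%:R `^ gam).
  rewrite (_ : - (c / 2) * q = - c * (q / 2)); last by ring.
  apply: powR_le_expR_decay (decay n) => //.
  - exact: ltW.
  - by rewrite divr_ge0// ltW.
  - exact: ltW.
  - by rewrite ge0_ler_powR ?nnegrE ?ler_nat// ltW.
have M_ge0 : 0 <= M by rewrite -lee_fin -hM integral_ge0.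
by rewrite mulrAC ler_pM ?powR_ge0 ?addr_ge0 ?lerD2l ?ler_norm.
Qed.
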